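(* Suppose the neighbor graph $\mathbb N$ (no self-arcs, $m\ge2$ vertices) is strongly connected and $\chi(\mathbb N)\le n$, where $\chi(\mathbb N)=\min_{\mathrm D}\max_{\mathbb E\in\mathrm D} l(\mathbb E)$, the minimum being over all ear decompositions $\mathrm D$ of $\mathbb N$ and $l(\mathbb E)$ the number of arcs in ear $\mathbb E$. Then there exist matrices $C_{ji}$ (one per arc, each with $n$ columns) with $\ker C_{ji}\ne 0$ for every arc $(j,i)$ such that $\bar{\mathbb N}$ is well-configured.
   Context: Setup: $m$ agents labeled $1,\dots,m$ with states $x_i\in\mathbb R^n$; neighbor graph $\mathbb N$ is a directed graph on $\{1,\dots,m\}$ without self-arcs; each arc $(j,i)$ carries a real matrix $C_{ji}$ with $n$ columns; $\bar{\mathbb N}$ denotes $\mathbb N$ with these matrices. $\bar{\mathbb N}$ is well-configured if for all $x_1,\dots,x_m\in\mathbb R^n$, $C_{ji}x_i=C_{ji}x_j$ for every arc $(j,i)$ implies $x_1=\cdots=x_m$. A directed path is a subgraph with distinct vertices $v_0,\dots,v_k$ ($k\ge1$) and arcs $(v_{r-1},v_r)$; its end-vertices are $v_0,v_k$. A directed cycle is a subgraph with distinct vertices $v_1,\dots,v_k$ ($k\ge 2$) and arcs $(v_r,v_{r+1})$, $r<k$, and $(v_k,v_1)$. An ear decomposition of a directed graph $\mathbb G$ is a sequence of subgraphs $\mathbb E_0,\dots,\mathbb E_p$ such that $\mathbb E_0$ is a directed cycle, each $\mathbb E_i$ ($i\ge1$) is a directed path or directed cycle, the $\mathbb E_i$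 are pairwise arc-disjoint with union $\mathbb G$, and for $i\ge1$: a cycle $\mathbb E_i$ has exactly one vertex in common with $\bigcup_{k<i}\mathbb E_k$, and a path $\mathbb E_i$ has its two end-vertices as the only vertices in common with $\bigcup_{k<i}\mathbb E_k$. A strongly connected graph with at least two vertices has at least one ear decomposition. *)

From HB Require Import structures.
From mathcomp Require Import all_boot all_order all_algebra.
From mathcomp Require Export reals.
Set Implicit Arguments. Unset Strict Implicit. Unset Printing Implicit Defensive.
Import Order.TTheory GRing.Theory Num.Theory.

(* Directed graph on vertices 'I_m : [E j i] means there is an arc (j,i). *)

(* An ear: a directed path given by its distinct vertices v_0,...,v_k (k>=1),
   or a directed cycle given by its distinct vertices v_1,...,v_k (k>=2). *)
Inductive ear (m : nat) :=
  | EarPath of seq 'I_m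
  | EarCycle of seq 'I_m.

Definition ear_verts m (e : ear m) : seq 'I_m :=
  match e with EarPath s => s | EarCycle s => s end.

Definition ear_arcs m (e : ear m) : seq ('I_m * 'I_m) :=
  match e with
  | EarPath s => zip s (behead s)
  | EarCycle s => match s with [::] => [::] | v :: t => zip s (rcons t v) end
  end.

Definition ear_wf m (e : ear m) : bool :=
  uniq (ear_verts e) && (2 <= size (ear_verts e)).

Definition ear_length m (e : ear m) : nat := size (ear_arcs e).

Definition is_cycle_ear m (e : ear m) : bool :=
  if e is EarCycle _ then true else false.

Definition ear_attached m (prev : seq 'I_m) (e : ear m) : Prop :=
  match e with
  | EarCycle s => exists v, forall w, (w \in s) && (w \in prev) = (w == v)
  | EarPath s => forall w, (w \in s) && (w \in prev) =
                   (w == head w s) || (w == last w s)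
  end.

Definition ear0 m : ear m := EarPath [::].

Definition is_ear_decomposition m (E : rel 'I_m) (D : seq (ear m)) : Prop :=
  [/\ (if D is e0 :: _ then is_cycle_ear e0 else false),
      all (@ear_wf m) D,
      (forall i j, i < j < size D ->
         ~~ has (fun a => a \in ear_arcs (nth (ear0 m) D j))
                (ear_arcs (nth (ear0 m) D i))),
      (forall u v, E u v <-> (exists2 i, i < size D & (u, v) \in ear_arcs (nth (ear0 m) D i))) /\
      (forall v, exists2 i, i < size D & v \in ear_verts (nth (ear0 m) D i))
    & (forall i, 0 < i < size D ->
         ear_attached (flatten (map (@ear_verts m) (take i D)))
                      (nth (ear0 m) D i))].

(* chi(N) <= n, where chi(N) = min over ear decompositions D of the maximal
   ear length in D (the minimum is attained, so this is equivalent to the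
   existence of a decomposition all of whose ears have length <= n). *)
Definition chi_le m (E : rel 'I_m) (n : nat) : Prop :=
  exists2 D, is_ear_decomposition E D & all (fun e => ear_length e <= n) D.

Definition well_configured (R : realType) m n (E : rel 'I_m)
    (k : 'I_m -> 'I_m -> nat) (C : forall j i : 'I_m, 'M[R]_(k j i, n)) : Prop :=
  forall x : 'I_m -> 'cV[R]_n,
    (forall j i, E j i -> (C j i *m x i = C j i *m x j)%R) ->
    forall i j, x i = x j.

From HB Require Import structures.
From mathcomp Require Import all_boot all_order all_algebra reals.
Import Order.TTheory GRing.Theory Num.Theory.

(* Label each arc by its position in the ear containing it; as every ear has at
   most n arcs, the labels lie below n, and C_ji is the diagonal projection
   killing coordinate label(j,i), whose kernel is the corresponding basis line.
   Fix a coordinate t of a solution x: its t-th entry agrees across every arc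
   not labelled t, and each ear has at most one arc labelled t.  Hence a path
   ear only takes the values of its two end-vertices and a cycle ear is
   constant, so adding the ears one at a time the t-th entry is constant on
   the whole graph. *)

Set Implicit Arguments.
Unset Strict Implicit.
Unset Printing Implicit Defensive.

Section Jumps.
Variables (T : eqType) (U : eqType) (g : T -> U).

Definition jumps_at_most_once (arcs : seq (T * T)) : Prop :=
  {in arcs &, forall a b, g a.1 != g a.2 -> g b.1 != g b.2 -> a = b}.

Lemma path_const x0 p :
  {in zip (x0 :: p) p, forall a, g a.1 = g a.2} -> {in x0 :: p, forall w, g w = g x0}.
Proof.
elim: p x0 => [|y p IHp] x0 flat w; first by rewrite mem_seq1 => /eqP ->.
have g_x0y : g x0 = g y by rewrite (flat (x0, y)) ?mem_head.
have IHy : {in y :: p, forall w, g w = g y}.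
  by apply: IHp => a a_p; apply: flat; rewrite inE a_p orbT.
by rewrite in_cons => /predU1P[-> // | /IHy->].
Qed.

Lemma path_two_values x0 p : uniq p -> jumps_at_most_once (zip (x0 :: p) p) ->
  {in x0 :: p, forall w, g w = g x0 \/ g w = g (last x0 p)}.
Proof.
elim: p x0 => [|y p IHp] x0 uniq_p jumps w; first by rewrite mem_seq1 => /eqP ->; left.
have /andP[y_notin_p uniq_tail] := uniq_p.
have tail : {subset zip (y :: p) p <= zip (x0 :: y :: p) (y :: p)}.
  by move=> a a_yp; rewrite inE a_yp orbT.
rewrite in_cons => /predU1P[->|w_yp]; first by left.
have [g_x0y|jump_x0y] := eqVneq (g x0) (g y).
  by rewrite g_x0y; apply: IHp uniq_tail (sub_in2 tail jumps) _ w_yp.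
have flat : {in zip (y :: p) p, forall a, g a.1 = g a.2}.
  move=> a a_yp; apply/eqP/negP => /negP jump_a.
  have a_x0y := jumps a (x0, y) (tail a a_yp) (mem_head _ _) jump_a jump_x0y.
  have := map_f snd a_yp; rewrite -/(unzip2 _) unzip2_zip ?leqnSn // a_x0y.
  by rewrite (negbTE y_notin_p).
right; rewrite /= (path_const flat w_yp); apply/esym/(path_const flat).
exact: mem_last.
Qed.

Lemma cycle_const v tl : uniq (v :: tl) -> jumps_at_most_once (zip (v :: tl) (rcons tl v)) ->
  {in v :: tl, forall w, g w = g v}.
Proof.
have arcsE : zip (v :: tl) (rcons tl v) = zip (v :: rcons tl v) (rcons tl v).
  by rewrite -rcons_cons -!cats1 -[X in _ = zip _ X]cats0 zip_cat ?cats0 //= size_cat addn1.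
move=> uniq_vtl; rewrite arcsE => jumps w w_vtl.
have uniq_tlv : uniq (rcons tl v) by rewrite rcons_uniq.
have w_vtlv : w \in v :: rcons tl v by rewrite in_cons mem_rcons w_vtl orbT.
by case: (path_two_values uniq_tlv jumps w_vtlv) => ->; rewrite ?last_rcons.
Qed.

End Jumps.

Section EarDecomposition.
Variables (m : nat) (U : eqType) (g : 'I_m -> U).

Lemma attached_ear_const (prev : seq 'I_m) (e : ear m) (c : U) :
  ear_wf e -> jumps_at_most_once g (ear_arcs e) -> ear_attached prev e ->
  {in prev, forall w, g w = c} -> {in ear_verts e, forall w, g w = c}.
Proof.
case: e => [[|x0 p]|[|v tl]] //= /andP[uniq_s _] jumps attached prev_c.
  have x0_prev : x0 \in prev by have := attached x0; rewrite mem_head eqxx /= => ->.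
  have last_prev : last x0 p \in prev.
    by have := attached (last x0 p); rewrite mem_last eqxx orbT /= => ->.
  have [_ uniq_p] := andP uniq_s.
  by move=> w /(path_two_values uniq_p jumps)[] ->; apply: prev_c.
have [u /(_ u)] := attached; rewrite eqxx => /andP[u_s u_prev] w w_s.
by rewrite (cycle_const uniq_s jumps w_s) -(cycle_const uniq_s jumps u_s) prev_c.
Qed.

Lemma ear_decomposition_const (E : rel 'I_m) (D : seq (ear m)) :
  is_ear_decomposition E D ->
  (forall r, r < size D -> jumps_at_most_once g (ear_arcs (nth (ear0 m) D r))) ->
  forall u w, g u = g w.
Proof.
case=> first_cycle wf _ [_ covered] attached jumps.
have D_gt0 : 0 < size D by case: (D) first_cycle.
have [v [tl D0]] : exists v tl, nth (ear0 m) D 0 = EarCycle (v :: tl).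
  move: first_cycle (all_nthP (ear0 m) wf 0 D_gt0).
  by case: (D) => [|[|[|v tl]] D'] //; exists v, tl.
have first_const : {in v :: tl, forall w, g w = g v}.
  have := all_nthP (ear0 m) wf 0 D_gt0; rewrite D0 => /andP[uniq_vtl _].
  by apply: cycle_const uniq_vtl _; have := jumps 0 D_gt0; rewrite D0.
have prefix_const i : i <= size D ->
    {in flatten (map (@ear_verts m) (take i D)), forall w, g w = g v}.
  elim: i => [|i IHi] i_lt w; first by rewrite take0.
  rewrite (take_nth (ear0 m)) // map_rcons flatten_rcons mem_cat => /orP[|w_i].
    exact: IHi (ltnW i_lt) w.
  have [i0|i_gt0] := posnP i; first by move: w_i; rewrite i0 D0; apply: first_const.
  apply: attached_ear_const w_i; first exact: all_nthP (ear0 m) wf i i_lt.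
  - exact: jumps.
  - by apply: attached; rewrite i_gt0.
  - exact: IHi (ltnW i_lt).
have all_const w : g w = g v.
  have [r r_lt w_r] := covered w.
  apply: (prefix_const (size D) (leqnn _)); rewrite take_size.
  apply/flattenP; exists (ear_verts (nth (ear0 m) D r)) => //.
  by rewrite -(nth_map (ear0 m) [::]) // mem_nth ?size_map.
by move=> u w; rewrite !all_const.
Qed.

End EarDecomposition.

Definition arc_label m (D : seq (ear m)) (a : 'I_m * 'I_m) : nat :=
  index a (ear_arcs (nth (ear0 m) D (find (fun e => a \in ear_arcs e) D))).

Lemma arc_labelE m (E : rel 'I_m) D r a : is_ear_decomposition E D ->
  r < size D -> a \in ear_arcs (nth (ear0 m) D r) ->
  arc_label D a = index a (ear_arcs (nth (ear0 m) D r)).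
Proof.
case=> _ _ disjoint _ _ r_lt a_r; rewrite /arc_label.
have a_D : has (fun e => a \in ear_arcs e) D by apply/(has_nthP (ear0 m)); exists r.
have [lt_r|gt_r|-> //] := ltngtP (find (fun e => a \in ear_arcs e) D) r.
  have a_find := nth_find (ear0 m) a_D.
  have ordered : find (fun e => a \in ear_arcs e) D < r < size D by rewrite lt_r.
  by case/negP: (disjoint _ _ ordered); apply/hasP; exists a.
by have := before_find (ear0 m) gt_r; rewrite a_r.
Qed.

Lemma arc_label_lt m (E : rel 'I_m) D n u v : is_ear_decomposition E D ->
  all (fun e => ear_length e <= n) D -> E u v -> arc_label D (u, v) < n.
Proof.
move=> decD short; have [_ _ _ [arcsE _] _] := decD.
case/arcsE=> r r_lt uv_r; rewrite (arc_labelE decD r_lt uv_r).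
by apply: leq_trans (all_nthP (ear0 m) short r r_lt); rewrite index_mem.
Qed.

Section EraseCoord.
Local Open Scope ring_scope.
Variables (R : nzRingType) (n : nat).

Definition erase_coord_mx (L : nat) : 'M[R]_n := diag_mx (\row_i (i != L :> nat)%:R).

Lemma erase_coord_mx_ker (i : 'I_n) :
  exists2 v : 'cV[R]_n, v != 0 & erase_coord_mx i *m v = 0.
Proof.
exists (delta_mx i 0).
  by apply/eqP => /matrixP/(_ i 0)/eqP; rewrite !mxE !eqxx oner_eq0.
apply/matrixP => t z; rewrite mul_diag_mx !mxE.
by case: (eqVneq t i) => [->|_]; rewrite ?eqxx ?mul0r ?mulr0.
Qed.

Lemma erase_coord_mx_mul_eq p (L : nat) (u v : 'M[R]_(n, p)) (t : 'I_n) (j : 'I_p) :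
  erase_coord_mx L *m u = erase_coord_mx L *m v -> t != L :> nat -> u t j = v t j.
Proof. by move=> /matrixP/(_ t j) + t_L; rewrite !mul_diag_mx !mxE t_L !mul1r. Qed.

End EraseCoord.

Local Open Scope ring_scope.

Theorem corollary5 (R : realType) (m n : nat) (E : rel 'I_m) :
  (2 <= m)%N ->
  irreflexive E ->
  (forall i j : 'I_m, connect E i j) ->
  chi_le E n ->
  exists k : 'I_m -> 'I_m -> nat,
  exists C : forall j i : 'I_m, 'M[R]_(k j i, n),
    (forall j i, E j i -> exists2 v : 'cV[R]_n, v != 0 & C j i *m v = 0) /\
    well_configured E C.
Proof.
move=> _ _ _ [D decD short].
exists (fun _ _ => n), (fun j i => erase_coord_mx R n (arc_label D (j, i))); split.
  by move=> j i /(arc_label_lt decD short) lt_n; apply: (erase_coord_mx_ker R (Ordinal lt_n)).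
move=> x agree u w; apply/matrixP => t z.
apply: (ear_decomposition_const (g := fun w => x w t z) decD) => r r_lt a b a_r b_r /=.
have jump_index c : c \in ear_arcs (nth (ear0 m) D r) -> x c.1 t z != x c.2 t z ->
    index c (ear_arcs (nth (ear0 m) D r)) = t.
  case: c => j i c_r /= jump; rewrite -(arc_labelE decD r_lt c_r).
  have [_ _ _ [arcsE _] _] := decD.
  have /agree Cx : E j i by apply/arcsE; exists r.
  by apply/eqP; rewrite eq_sym; apply: contraNT jump => /(erase_coord_mx_mul_eq z Cx) ->.
move=> jump_a jump_b; apply: (index_inj a a_r b_r).
by rewrite (jump_index a a_r jump_a) (jump_index b b_r jump_b).
Qed.
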